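(* Let $(X,d)$ be a finite ultrametric space with $|X|\geqslant 2$ whose diametral graph $G_d$ is complete bipartite, $G_d=G[X_1,X_2]$. If $(X_i,d)\in\mathfrak U$ for $i=1,2$ and $\operatorname{Sp}(X_1)\cap\operatorname{Sp}(X_2)=\varnothing$, then $(X,d)\in\mathfrak U$.
   Context: $\operatorname{Sp}(X)=\{d(x,y):x,y\in X,\ x\neq y\}$ (empty for one-point spaces); $\operatorname{diam}X=\max d(x,y)$. $\mathfrak U$ is the class of finite ultrametric spaces $X$ with $|\operatorname{Sp}(X)|=|X|-1$. The diametral graph $G_d$ has vertex set $X$ and edges the pairs $\{u,v\}$ with $d(u,v)=\operatorname{diam}X$; $G[X_1,X_2]$ is the complete bipartite graph with parts $X_1,X_2$. $(X_i,d)$ denotes the subspace with the restricted metric. *)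

From mathcomp Require Import all_boot all_order all_algebra.
Set Implicit Arguments. Unset Strict Implicit. Unset Printing Implicit Defensive.
Import Order.TTheory GRing.Theory Num.Theory.
Local Open Scope ring_scope.

Definition is_metric (R : realDomainType) (T : finType) (d : T -> T -> R) :=
  [/\ forall x y, 0 <= d x y,
      forall x y, (d x y = 0) <-> (x = y),
      forall x y, d x y = d y x &
      forall x y z, d x z <= d x y + d y z].

Definition is_ultrametric (R : realDomainType) (T : finType) (d : T -> T -> R) :=
  is_metric d /\ forall x y z, d x z <= Num.max (d x y) (d y z).

Definition Sp (R : realDomainType) (T : finType) (d : T -> T -> R) (A : {set T})
  : seq R :=
  undup [seq d p.1 p.2 | p <- enum [set p : T * T | (p.1 \in A) && (p.2 \in A)
                                                    && (p.1 != p.2)]].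

Definition diam (R : realDomainType) (T : finType) (d : T -> T -> R) (A : {set T}) : R :=
  \big[Num.max/0]_(p : T * T | (p.1 \in A) && (p.2 \in A)) d p.1 p.2.

Definition in_U (R : realDomainType) (T : finType) (d : T -> T -> R) (A : {set T}) :=
  size (Sp d A) = #|A|.-1.

(* The diametral graph of (T,d) is the complete bipartite graph G[X1,X2]:
   X1, X2 is a partition of T into nonempty parts, and for u, v in T,
   {u,v} is an edge (d u v = diam T) iff u, v lie in different parts. *)
Definition diametral_complete_bipartite (R : realDomainType) (T : finType)
  (d : T -> T -> R) (X1 X2 : {set T}) :=
  [/\ X1 != set0, X2 != set0, [disjoint X1 & X2], X1 :|: X2 = [set: T] &
      forall u v, u != v ->
        (d u v = diam d [set: T] <->
          (u \in X1 /\ v \in X2) \/ (u \in X2 /\ v \in X1))].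

From mathcomp Require Import all_boot all_order all_algebra.
From mathcomp Require Import zify.
Set Implicit Arguments. Unset Strict Implicit. Unset Printing Implicit Defensive.
Import Order.TTheory GRing.Theory Num.Theory.
Local Open Scope ring_scope.

(* Distances inside one part are never diametral, while every cross distance
   is, so the spectrum of X is the disjoint union of {diam X}, Sp(X1) and
   Sp(X2); counting gives 1 + (|X1| - 1) + (|X2| - 1) = |X| - 1. *)

Lemma SpP (R : realDomainType) (T : finType) (d : T -> T -> R) (A : {set T}) r :
  reflect (exists x y, [/\ x \in A, y \in A, x != y & r = d x y]) (r \in Sp d A).
Proof.
rewrite /Sp mem_undup; apply: (iffP mapP).
- by case=> [[x y]]; rewrite mem_enum inE /= => /andP[/andP[? ?] ?] ->; exists x, y.
- case=> x [y [xA yA xy ->]]; exists (x, y) => //.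
  by rewrite mem_enum inE /= xA yA xy.
Qed.

Lemma Sp_uniq (R : realDomainType) (T : finType) (d : T -> T -> R) (A : {set T}) :
  uniq (Sp d A).
Proof. exact: undup_uniq. Qed.

Section CompleteBipartiteDiametralGraph.

Variables (R : realDomainType) (T : finType) (d : T -> T -> R) (X1 X2 : {set T}).
Hypothesis bipX : diametral_complete_bipartite d X1 X2.

Let D := diam d [set: T].

Lemma card_bipartite : #|T| = (#|X1| + #|X2|)%N.
Proof.
case: bipX => _ _ disX covX _.
by rewrite -cardsT -covX cardsU (disjoint_setI0 disX) cards0 subn0.
Qed.

Lemma in_part u : (u \in X1) || (u \in X2).
Proof. by case: bipX => _ _ _ covX _; rewrite -in_setU covX inE. Qed.

Lemma notin_both_parts [u] : u \in X1 -> u \in X2 -> False.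
Proof.
by case: bipX => _ _ disX _ _ u1 u2; move/disjointFr: disX => /(_ u u1); rewrite u2.
Qed.

Lemma neq_cross_parts [u v] : u \in X1 -> v \in X2 -> u != v.
Proof. by move=> u1 v2; apply/eqP=> eq_uv; rewrite eq_uv in u1; exact: notin_both_parts v2. Qed.

Lemma dist_cross_parts [u v] : u \in X1 -> v \in X2 -> d u v = D /\ d v u = D.
Proof.
case: bipX => _ _ _ _ edgeP u1 v2; have uv := neq_cross_parts u1 v2.
by split; [apply/(edgeP u v uv); left | apply/(edgeP v u); [rewrite eq_sym | right]].
Qed.

Lemma diam_notin_Sp_part A : A = X1 \/ A = X2 -> D \notin Sp d A.
Proof.
case: bipX => _ _ _ _ edgeP partA; apply/SpP => -[u [v [uA vA uv /esym/(edgeP u v uv)]]].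
by case: partA => ->{A} in uA vA *; case=> -[Xu Xv];
  solve [exact: (@notin_both_parts u) | exact: (@notin_both_parts v)].
Qed.

Lemma Sp_bipartite : Sp d [set: T] =i D :: Sp d X1 ++ Sp d X2.
Proof.
move=> r; rewrite inE mem_cat; apply/SpP/idP.
- case=> u [v [_ _ uv ->]].
  case/orP: (in_part u) => Xu; case/orP: (in_part v) => Xv.
  + by apply/orP; right; apply/orP; left; apply/SpP; exists u, v.
  + by rewrite (dist_cross_parts Xu Xv).1 eqxx.
  + by rewrite (dist_cross_parts Xv Xu).2 eqxx.
  + by apply/orP; right; apply/orP; right; apply/SpP; exists u, v.
- case/orP => [/eqP ->|/orP[]/SpP[u [v [Xu Xv uv ->]]]]; last 2 first.
  + by exists u, v; rewrite !inE.
  + by exists u, v; rewrite !inE.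
  case: bipX => /set0Pn[u u1] /set0Pn[v v2] _ _ _.
  by exists u, v; rewrite !inE (neq_cross_parts u1 v2) (dist_cross_parts u1 v2).1.
Qed.

Lemma size_Sp_bipartite :
  (forall r, r \in Sp d X1 -> r \notin Sp d X2) ->
  size (Sp d [set: T]) = (size (Sp d X1) + size (Sp d X2)).+1.
Proof.
move=> disSp; rewrite -size_cat.
have uniq_parts : uniq (D :: Sp d X1 ++ Sp d X2).
  rewrite /= mem_cat negb_or !diam_notin_Sp_part ?cat_uniq ?Sp_uniq; try by [left | right].
  by rewrite /= andbT; apply/hasPn => r Sp2r; apply: contraL Sp2r; apply: disSp.
have := uniq_size_uniq uniq_parts (fun r => esym (Sp_bipartite r)).
by rewrite Sp_uniq => /esym/eqP.
Qed.

End CompleteBipartiteDiametralGraph.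

Theorem corollary15 (R : realDomainType) (T : finType) (d : T -> T -> R)
  (X1 X2 : {set T}) :
  is_ultrametric d ->
  (2 <= #|T|)%N ->
  diametral_complete_bipartite d X1 X2 ->
  in_U d X1 -> in_U d X2 ->
  (forall r, r \in Sp d X1 -> r \notin Sp d X2) ->
  in_U d [set: T].
Proof.
move=> _ _ bipX U1 U2 disSp.
have [X1_gt0 X2_gt0 _ _ _] := bipX; rewrite -!card_gt0 in X1_gt0 X2_gt0.
rewrite /in_U (size_Sp_bipartite bipX disSp) U1 U2 cardsT (card_bipartite bipX).
lia.
Qed.
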